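(* Let $(G,D,\star)$ be a probabilistic metric space with $\star$ continuous. Let $f,g\in\Pi(G)$ and let $(a_n),(b_n)\subset G$ be any Cauchy sequences such that $D(a_n,x)\xrightarrow{w}f(x)$ and $D(b_n,x)\xrightarrow{w}g(x)$ for all $x\in G$. Then the weak limit $\lim_{n,m\to\infty}D(a_n,b_m)$ exists, does not depend on the choice of the sequences $(a_n),(b_n)$, and $$\sup_{x\in G}f(x)\star g(x)=\lim_{n,m}D(a_n,b_m)=\lim_n D(a_n,b_n)=\lim_m f(b_m)=\lim_n g(a_n),$$ all limits being weak limits in $\Delta^+$.
   Context: A distribution function is a nondecreasing, left-continuous function $F:[-\infty,+\infty]\to[0,1]$ with $F(-\infty)=0$, $F(+\infty)=1$; $\Delta^+$ is the set of distribution functions with $F(0)=0$, ordered pointwise (a complete lattice with maximum $\mathcal H_0$, $\mathcal H_0(t)=0$ for $t\le0$, $1$ for $t>0$). A triangle function is a binary operation $\star$ on $\Delta^+$ that is commutative, associative, nondecreasing in each argument, with $F\star\mathcal H_0=F$. $F_n\xrightarrow{w}F$ means $F_n(t)\to F(t)$ at every continuity point $t\in\mathbb R$ of $F$; $\star$ is continuous if $F_n\star L_n\xrightarrow{w}F\star L$ whenever $F_n\xrightarrow{w}F$, $L_n\xrightarrow{w}L$. A probabilistic metric space $(G,D,\star)$ consists of a set $G$, a triangle function $\star$ and $D:G\times G\to\Delta^+$ with (i) $D(p,q)=\mathcal H_0$ iff $p=q$; (ii) $D(p,q)=D(q,p)$; (iii) $D(p,q)\star D(q,r)\le D(p,r)$.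 A sequence $(z_n)\subset G$ is Cauchy if $D(z_n,z_p)\xrightarrow{w}\mathcal H_0$ as $n,p\to\infty$. A map $f:G\to\Delta^+$ is probabilistic $1$-Lipschitz if $D(x,y)\star f(y)\le f(x)$ for all $x,y$. $\Pi(G)$ is the set of probabilistic $1$-Lipschitz maps $f$ for which there is a Cauchy sequence $(a_n)\subset G$ with $D(a_n,x)\xrightarrow{w}f(x)$ for all $x\in G$. *)

From Stdlib Require Import Reals.
Open Scope R_scope.

(* A distribution function F on [-oo,+oo] with F(-oo)=0, F(+oo)=1 is
   determined by its restriction to R (the values at -oo/+oo are fixed by
   convention).  We represent elements of Delta^+ by functions R -> R. *)
Definition dfun := R -> R.

Definition left_continuous (F : dfun) : Prop :=
  forall t eps, 0 < eps -> exists d, 0 < d /\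
    forall s, t - d < s -> s <= t -> Rabs (F s - F t) < eps.

Definition in_Dplus (F : dfun) : Prop :=
  (forall s t, s <= t -> F s <= F t) /\
  (forall t, 0 <= F t <= 1) /\
  left_continuous F /\
  F 0 = 0.

(* pointwise order (values at -oo, +oo agree for all elements) *)
Definition dle (F L : dfun) : Prop := forall t, F t <= L t.

Definition H0 : dfun := fun t => if Rle_dec t 0 then 0 else 1.

Definition triangle_function (star : dfun -> dfun -> dfun) : Prop :=
  (forall F L, in_Dplus F -> in_Dplus L -> in_Dplus (star F L)) /\
  (forall F L, in_Dplus F -> in_Dplus L -> forall t, star F L t = star L F t) /\
  (forall F L M, in_Dplus F -> in_Dplus L -> in_Dplus M ->
     forall t, star (star F L) M t = star F (star L M) t) /\
  (forall F F' L, in_Dplus F -> in_Dplus F' -> in_Dplus L ->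
     dle F F' -> dle (star F L) (star F' L)) /\
  (forall F, in_Dplus F -> forall t, star F H0 t = F t).

Definition wconv (Fn : nat -> dfun) (F : dfun) : Prop :=
  forall t, continuity_pt F t -> Un_cv (fun n => Fn n t) (F t).

Definition wconv2 (Fnm : nat -> nat -> dfun) (F : dfun) : Prop :=
  forall t, continuity_pt F t ->
    forall eps, 0 < eps -> exists N : nat, forall n m, (N <= n)%nat -> (N <= m)%nat ->
      Rabs (Fnm n m t - F t) < eps.

Definition star_continuous (star : dfun -> dfun -> dfun) : Prop :=
  forall (Fn Ln : nat -> dfun) (F L : dfun),
    (forall n, in_Dplus (Fn n)) -> (forall n, in_Dplus (Ln n)) ->
    in_Dplus F -> in_Dplus L ->
    wconv Fn F -> wconv Ln L -> wconv (fun n => star (Fn n) (Ln n)) (star F L).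

Definition PMspace (G : Type) (D : G -> G -> dfun) (star : dfun -> dfun -> dfun) : Prop :=
  triangle_function star /\
  (forall p q, in_Dplus (D p q)) /\
  (forall p q, D p q = H0 <-> p = q) /\
  (forall p q, D p q = D q p) /\
  (forall p q r, dle (star (D p q) (D q r)) (D p r)).

Definition cauchy_seq {G : Type} (D : G -> G -> dfun) (z : nat -> G) : Prop :=
  wconv2 (fun n p => D (z n) (z p)) H0.

Definition prob_lipschitz {G : Type} (D : G -> G -> dfun) star (f : G -> dfun) : Prop :=
  (forall x, in_Dplus (f x)) /\
  (forall x y, dle (star (D x y) (f y)) (f x)).

Definition in_Pi {G : Type} (D : G -> G -> dfun) star (f : G -> dfun) : Prop :=
  prob_lipschitz D star f /\
  exists a : nat -> G, cauchy_seq D a /\ forall x, wconv (fun n => D (a n) x) (f x).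

Definition is_sup {I : Type} (Fam : I -> dfun) (S : dfun) : Prop :=
  in_Dplus S /\ (forall i, dle (Fam i) S) /\
  (forall U, in_Dplus U -> (forall i, dle (Fam i) U) -> dle S U).

From Stdlib Require Import Reals Lra Lia ClassicalEpsilon Classical FunctionalExtensionality.
Open Scope R_scope.

(* The common limit is the pointwise supremum L of x |-> f(x) * g(x).  From below,
   D(a_n, x) * D(x, b_m) <= D(a_n, b_m) and the left side tends to f(x) * g(x) by
   continuity of *.  From above, D(a_n, b_m) * (f(a_n) * g(b_m)) <= f(b_m) * g(b_m) <= L
   by the Lipschitz property of f, while f(a_n) * g(b_m) -> H0 because the sequences are
   Cauchy; comparing with a jump function turns this into limsup D(a_n, b_m) <= L.
   The same two estimates give f(b_m) -> L, and g(a_n) -> L follows by symmetry. *)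

Lemma continuity_ptE (F : R -> R) (t : R) :
  continuity_pt F t <->
  forall e, 0 < e -> exists d, 0 < d /\
    forall x, Rabs (x - t) < d -> Rabs (F x - F t) < e.
Proof.
  split; intros H e He; destruct (H e He) as [d [Hd Hx]]; exists d; split; auto.
  - intros x Hxt. destruct (Req_dec x t) as [->|Hne].
    + rewrite Rminus_diag, Rabs_R0; exact He.
    + apply Hx. split; [split; [exact I | auto] | exact Hxt].
  - intros x [_ Hxt]. apply Hx. exact Hxt.
Qed.

Lemma continuity_pt_locally_const (F : R -> R) (t d : R) :
  0 < d -> (forall x, Rabs (x - t) < d -> F x = F t) -> continuity_pt F t.
Proof.
  intros Hd H. apply continuity_ptE. intros e He. exists d; split; [exact Hd|].
  intros x Hx. rewrite (H x Hx), Rminus_diag, Rabs_R0. exact He.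
Qed.

Section NondecreasingContinuityPoint.

Variable F : R -> R.
Hypothesis F_nondecr : forall s t, s <= t -> F s <= F t.

(* Of the two middle quarters of [p, q], keep the one on which F increases less:
   the increase of F is at least halved. *)
Definition halve_increase (I : R * R) : R * R :=
  let (p, q) := I in
  let h := (q - p) / 4 in
  if Rle_dec (F (p + 2 * h) - F (p + h)) (F (p + 3 * h) - F (p + 2 * h))
  then (p + h, p + 2 * h) else (p + 2 * h, p + 3 * h).

Lemma halve_increase_spec (I : R * R) : fst I < snd I ->
  fst I < fst (halve_increase I) /\
  fst (halve_increase I) < snd (halve_increase I) /\
  snd (halve_increase I) < snd I /\
  2 * (F (snd (halve_increase I)) - F (fst (halve_increase I))) <= F (snd I) - F (fst I).
Proof.
  destruct I as [p q]; simpl; intros Hpq. unfold halve_increase.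
  set (h := (q - p) / 4).
  assert (Hq : q = p + 4 * h) by (unfold h; field).
  assert (Hh : 0 < h) by (unfold h; lra).
  assert (F p <= F (p + h)) by (apply F_nondecr; lra).
  assert (F (p + 3 * h) <= F q) by (apply F_nondecr; lra).
  destruct Rle_dec; simpl; lra.
Qed.

Lemma nondecreasing_continuity_pt (u v : R) : u < v ->
  exists c, u < c /\ c < v /\ continuity_pt F c.
Proof.
  intros Huv.
  set (I k := Nat.iter k halve_increase (u, v)).
  set (U k := fst (I k)); set (V k := snd (I k)).
  assert (HI : forall k, U k < V k /\ F (V k) - F (U k) <= (/ 2) ^ k * (F v - F u)).
  { induction k as [|k [Hk HW]]; [unfold U, V; simpl; lra|].
    destruct (halve_increase_spec (I k) Hk) as (_ & Hlt & _ & Hhalf).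
    fold (U k) (V k) in Hhalf. unfold U, V. change (I (S k)) with (halve_increase (I k)).
    simpl pow. split; [exact Hlt|]. rewrite Rmult_assoc. lra. }
  assert (Hstep : forall k, U k < U (S k) /\ V (S k) < V k).
  { intro k. destruct (halve_increase_spec (I k) (proj1 (HI k))) as (H1 & _ & H2 & _).
    split; [exact H1 | exact H2]. }
  assert (HUV : forall m k, U m <= V k).
  { intros m k.
    pose proof (growing_prop U (max m k) m (fun n => Rlt_le _ _ (proj1 (Hstep n))) ltac:(lia)).
    pose proof (decreasing_prop V k (max m k) (fun n => Rlt_le _ _ (proj2 (Hstep n))) ltac:(lia)).
    pose proof (proj1 (HI (max m k))). lra. }
  destruct (completeness (fun r => exists k, r = U k)) as [c [Hub Hleast]].
  { exists (V 0%nat). intros r [k ->]. apply HUV. }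
  { exists (U 0%nat), 0%nat. reflexivity. }
  assert (Hc : forall k, U k < c /\ c < V k).
  { intro k. pose proof (Hstep k).
    assert (U (S k) <= c) by (apply Hub; exists (S k); reflexivity).
    assert (c <= V (S k)) by (apply Hleast; intros r [m ->]; apply HUV).
    lra. }
  exists c. split; [|split].
  - exact (proj1 (Hc 0%nat)).
  - exact (proj2 (Hc 0%nat)).
  - apply continuity_ptE. intros e He.
    assert (HC : F u <= F v) by (apply F_nondecr; lra).
    destruct (pow_lt_1_zero (/ 2) ltac:(rewrite Rabs_pos_eq; lra) (e / (F v - F u + 1)))
      as [k Hk]; [apply Rdiv_lt_0_compat; lra|].
    specialize (Hk k (Nat.le_refl k)).
    assert (Hpow : 0 <= (/ 2) ^ k) by (apply pow_le; lra).
    rewrite Rabs_pos_eq in Hk by exact Hpow.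
    assert (Hsmall : (/ 2) ^ k * (F v - F u) < e).
    { apply (Rmult_lt_compat_r (F v - F u + 1)) in Hk; [|lra].
      unfold Rdiv in Hk. rewrite Rmult_assoc, Rinv_l, Rmult_1_r in Hk by lra. nra. }
    destruct (Hc k) as [HUc HcV]. pose proof (proj2 (HI k)).
    exists (Rmin (c - U k) (V k - c)). split; [apply Rmin_pos; lra|].
    intros x Hx.
    pose proof (Rmin_l (c - U k) (V k - c)). pose proof (Rmin_r (c - U k) (V k - c)).
    apply Rabs_def2 in Hx.
    assert (F (U k) <= F x) by (apply F_nondecr; lra).
    assert (F x <= F (V k)) by (apply F_nondecr; lra).
    assert (F (U k) <= F c) by (apply F_nondecr; lra).
    assert (F c <= F (V k)) by (apply F_nondecr; lra).
    apply Rabs_def1; lra.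
Qed.

End NondecreasingContinuityPoint.

Lemma in_Dplus_nondecreasing (F : dfun) (s t : R) : in_Dplus F -> s <= t -> F s <= F t.
Proof. intros [HF _] Hst. exact (HF s t Hst). Qed.

Lemma in_Dplus_bounds (F : dfun) (t : R) : in_Dplus F -> 0 <= F t <= 1.
Proof. intros (_ & HF & _). exact (HF t). Qed.

Lemma in_Dplus_nonpos (F : dfun) (t : R) : in_Dplus F -> t <= 0 -> F t = 0.
Proof.
  intros HF Ht. pose proof (in_Dplus_nondecreasing F t 0 HF Ht).
  pose proof (in_Dplus_bounds F t HF). destruct HF as (_ & _ & _ & H0F). lra.
Qed.

Lemma in_Dplus_continuity_pt (F : dfun) (u v : R) : in_Dplus F -> u < v ->
  exists c, u < c /\ c < v /\ continuity_pt F c.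
Proof. intros [HF _]. exact (nondecreasing_continuity_pt F HF u v). Qed.

Definition jump (t h : R) : dfun := fun x => if Rle_dec x t then 0 else h.

Lemma jump_in_Dplus (t h : R) : 0 <= t -> 0 <= h <= 1 -> in_Dplus (jump t h).
Proof.
  intros Ht Hh. unfold in_Dplus, jump. split; [|split; [|split]].
  - intros s u Hsu. destruct (Rle_dec s t), (Rle_dec u t); lra.
  - intro u. destruct (Rle_dec u t); lra.
  - intros x e He. destruct (Rle_dec x t) as [Hx|Hx].
    + exists 1. split; [lra|]. intros s Hs1 Hs2. destruct (Rle_dec s t); [|lra].
      rewrite Rminus_diag, Rabs_R0; lra.
    + exists (x - t). split; [lra|]. intros s Hs1 Hs2. destruct (Rle_dec s t); [lra|].
      rewrite Rminus_diag, Rabs_R0; lra.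
  - destruct (Rle_dec 0 t); lra.
Qed.

Lemma jump_continuity_pt (t h x : R) : x <> t -> continuity_pt (jump t h) x.
Proof.
  intro Hx. apply (continuity_pt_locally_const _ _ (Rabs (x - t))).
  - apply Rabs_pos_lt. lra.
  - intros y Hy. unfold jump. unfold Rabs in Hy.
    destruct (Rcase_abs (y - x)), (Rcase_abs (x - t)), (Rle_dec y t), (Rle_dec x t); lra.
Qed.

Lemma H0_in_Dplus : in_Dplus H0.
Proof. exact (jump_in_Dplus 0 1 (Rle_refl 0) ltac:(lra)). Qed.

Lemma wconv_const (F : dfun) : wconv (fun _ => F) F.
Proof.
  intros t _ e He. exists 0%nat. intros n _.
  unfold Rdist. rewrite Rminus_diag, Rabs_R0. exact He.
Qed.

Lemma wconv_subseq (Fn : nat -> dfun) (F : dfun) (phi : nat -> nat) :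
  (forall k, (k <= phi k)%nat) -> wconv Fn F -> wconv (fun k => Fn (phi k)) F.
Proof.
  intros Hphi Hw t Ht e He. destruct (Hw t Ht e He) as [N HN].
  exists N. intros n Hn. apply HN. specialize (Hphi n). lia.
Qed.

Lemma wconv2_diag (Fnm : nat -> nat -> dfun) (F : dfun) :
  wconv2 Fnm F -> wconv (fun n => Fnm n n) F.
Proof.
  intros Hw t Ht e He. destruct (Hw t Ht e He) as [N HN].
  exists N. intros n Hn. exact (HN n n Hn Hn).
Qed.

Lemma eventually2_of_subseqs (P : nat -> nat -> Prop) :
  (forall phi psi : nat -> nat, (forall k, (k <= phi k)%nat) -> (forall k, (k <= psi k)%nat) ->
     exists K, forall k, (K <= k)%nat -> P (phi k) (psi k)) ->
  exists N, forall n m, (N <= n)%nat -> (N <= m)%nat -> P n m.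
Proof.
  intros H. apply NNPP. intro Hno.
  assert (Hbad : forall N, exists nm : nat * nat,
            (N <= fst nm)%nat /\ (N <= snd nm)%nat /\ ~ P (fst nm) (snd nm)).
  { intros N. apply NNPP. intro Hc. apply Hno. exists N. intros n m Hn Hm.
    apply NNPP. intro Hp. apply Hc. exists (n, m). simpl. tauto. }
  destruct (choice _ Hbad) as [bad Hb].
  destruct (H (fun k => fst (bad k)) (fun k => snd (bad k))) as [K HK];
    [intro k; apply Hb .. |].
  exact (proj2 (proj2 (Hb K)) (HK K (Nat.le_refl K))).
Qed.

Section WeakLimits.

Variables (Fn : nat -> dfun) (F : dfun).
Hypotheses (HFn : forall n, in_Dplus (Fn n)) (HF : in_Dplus F) (Hw : wconv Fn F).

(* No continuity of [F] at [t] is needed, since [F] is left-continuous. *)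
Lemma wconv_eventually_gt (t e : R) : 0 < e ->
  exists N, forall n, (N <= n)%nat -> F t - e < Fn n t.
Proof.
  intros He.
  destruct HF as (_ & _ & HFlc & _).
  destruct (HFlc t (e / 2)) as [d [Hd Hl]]; [lra|].
  destruct (in_Dplus_continuity_pt F (t - d) t HF) as [s (Hs1 & Hs2 & Hs)]; [lra|].
  specialize (Hl s Hs1 (Rlt_le _ _ Hs2)). apply Rabs_def2 in Hl.
  destruct (Hw s Hs (e / 2)) as [N HN]; [lra|].
  exists N. intros n Hn. specialize (HN n Hn). unfold Rdist in HN. apply Rabs_def2 in HN.
  pose proof (in_Dplus_nondecreasing (Fn n) s t (HFn n) (Rlt_le _ _ Hs2)). lra.
Qed.

Lemma wconv_ge (s t c : R) : s < t ->
  (exists N, forall n, (N <= n)%nat -> c <= Fn n s) -> c <= F t.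
Proof.
  intros Hst [N HN].
  destruct (in_Dplus_continuity_pt F s t HF Hst) as [r (Hr1 & Hr2 & Hr)].
  pose proof (in_Dplus_nondecreasing F r t HF (Rlt_le _ _ Hr2)).
  apply Rnot_lt_le. intro Hlt.
  destruct (Hw r Hr (c - F r)) as [M HM]; [lra|].
  specialize (HM (max N M) ltac:(lia)). specialize (HN (max N M) ltac:(lia)).
  pose proof (in_Dplus_nondecreasing (Fn (max N M)) s r (HFn _) (Rlt_le _ _ Hr1)).
  unfold Rdist in HM. apply Rabs_def2 in HM. lra.
Qed.

End WeakLimits.

Section TriangleFunction.

Variable star : dfun -> dfun -> dfun.
Hypothesis star_tri : triangle_function star.

Lemma star_H0_r (F : dfun) : in_Dplus F -> star F H0 = F.
Proof.
  intros HF. apply functional_extensionality. intro t.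
  destruct star_tri as (_ & _ & _ & _ & Hid). exact (Hid F HF t).
Qed.

Hypothesis star_cont : star_continuous star.

(* If [V k * U k <= L] with [U k -> H0], then [limsup V k t <= L t] at continuity
   points of [L]: otherwise the jump [h 1_(t, oo)] with [h = L t + e] lies below
   infinitely many [V k], and [jump * U k -> jump] beats [L] just right of [t]. *)
Lemma eventually_lt_of_star_le (L : dfun) (V U : nat -> dfun) :
  in_Dplus L -> (forall k, in_Dplus (V k)) -> (forall k, in_Dplus (U k)) ->
  wconv U H0 -> (forall k, dle (star (V k) (U k)) L) ->
  forall t, continuity_pt L t -> forall e, 0 < e ->
  exists K, forall k, (K <= k)%nat -> V k t < L t + e.
Proof.
  intros HL HV HU HUc Hle t Ht e He.
  destruct (Rle_dec t 0) as [Ht0|Ht0].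
  { exists 0%nat. intros k _. rewrite (in_Dplus_nonpos _ _ (HV k) Ht0).
    pose proof (in_Dplus_bounds L t HL). lra. }
  destruct (Rlt_dec 1 (L t + e)) as [Hbig|Hbig].
  { exists 0%nat. intros k _. pose proof (in_Dplus_bounds (V k) t (HV k)). lra. }
  set (h := L t + e).
  assert (HW : in_Dplus (jump t h))
    by (apply jump_in_Dplus; pose proof (in_Dplus_bounds L t HL); unfold h; lra).
  destruct (proj1 (continuity_ptE L t) Ht (e / 2)) as [d [Hd Hcd]]; [lra|].
  set (s := t + d / 2).
  assert (HLs : L s < L t + e / 2).
  { assert (Hs : Rabs (s - t) < d) by (unfold s; rewrite Rabs_right; lra).
    specialize (Hcd s Hs). apply Rabs_def2 in Hcd. lra. }
  pose proof (star_cont _ _ _ _ (fun _ => HW) HU HW H0_in_Dplus (wconv_const _) HUc) as HWU.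
  rewrite (star_H0_r _ HW) in HWU.
  destruct (HWU s (jump_continuity_pt t h s ltac:(unfold s; lra)) (e / 2)) as [K HK]; [lra|].
  exists K. intros k Hk. specialize (HK k Hk). unfold Rdist in HK. apply Rabs_def2 in HK.
  apply Rnot_le_lt. intro Hge.
  assert (HWV : dle (jump t h) (V k)).
  { intro x. unfold jump. destruct (Rle_dec x t) as [Hx|Hx].
    - apply in_Dplus_bounds, HV.
    - pose proof (in_Dplus_nondecreasing (V k) t x (HV k) ltac:(lra)). lra. }
  destruct star_tri as (_ & _ & _ & Hmono & _).
  pose proof (Hmono _ _ _ HW (HV k) (HU k) HWV s).
  pose proof (Hle k s).
  assert (Hjs : jump t h s = h) by (unfold jump, s; destruct (Rle_dec (t + d / 2) t); lra).
  unfold h in *. lra.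
Qed.

End TriangleFunction.

Lemma wconv_generated_H0 (G : Type) (D : G -> G -> dfun) (f : G -> dfun) (a : nat -> G) :
  (forall p q, in_Dplus (D p q)) -> (forall x, in_Dplus (f x)) ->
  cauchy_seq D a -> (forall x, wconv (fun n => D (a n) x) (f x)) ->
  wconv (fun n => f (a n)) H0.
Proof.
  intros HD Hf Ha Haf t Ht e He.
  destruct (Rle_dec t 0) as [Ht0|Ht0].
  { exists 0%nat. intros n _. unfold Rdist, H0.
    rewrite (in_Dplus_nonpos _ _ (Hf (a n)) Ht0).
    destruct (Rle_dec t 0); [|lra]. rewrite Rminus_diag, Rabs_R0; lra. }
  assert (HH : H0 t = 1) by (unfold H0; destruct (Rle_dec t 0); lra).
  assert (HH2 : H0 (t / 2) = 1) by (unfold H0; destruct (Rle_dec (t / 2) 0); lra).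
  destruct (Ha (t / 2) (jump_continuity_pt 0 1 (t / 2) ltac:(lra)) (e / 2)) as [N HN]; [lra|].
  exists N. intros n Hn. unfold Rdist. rewrite HH.
  assert (1 - e / 2 <= f (a n) t).
  { apply (wconv_ge (fun p => D (a p) (a n)) (f (a n)) (fun p => HD _ _) (Hf _) (Haf _)
             (t / 2)); [lra|].
    exists N. intros p Hp. specialize (HN p n Hp Hn). rewrite HH2 in HN.
    apply Rabs_def2 in HN. lra. }
  pose proof (in_Dplus_bounds (f (a n)) t (Hf (a n))).
  apply Rabs_def1; lra.
Qed.

Definition psup {I : Type} (Fam : I -> dfun) : dfun :=
  fun t => epsilon (inhabits 0) (is_lub (fun r => exists i, r = Fam i t)).

Section PointwiseSup.

Variables (I : Type) (Fam : I -> dfun).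
Hypotheses (I_inhabited : inhabited I) (HFam : forall i, in_Dplus (Fam i)).

Lemma psup_is_lub (t : R) : is_lub (fun r => exists i, r = Fam i t) (psup Fam t).
Proof.
  unfold psup. apply epsilon_spec. destruct I_inhabited as [i].
  destruct (completeness (fun r => exists i, r = Fam i t)) as [m Hm].
  - exists 1. intros r [j ->]. apply in_Dplus_bounds, HFam.
  - exists (Fam i t), i. reflexivity.
  - exists m. exact Hm.
Qed.

Lemma psup_ge (i : I) (t : R) : Fam i t <= psup Fam t.
Proof. apply (psup_is_lub t). exists i. reflexivity. Qed.

Lemma psup_le (t c : R) : (forall i, Fam i t <= c) -> psup Fam t <= c.
Proof. intros Hc. apply (psup_is_lub t). intros r [i ->]. apply Hc. Qed.

Lemma psup_approx (t e : R) : 0 < e -> exists i, psup Fam t - e < Fam i t.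
Proof.
  intros He. apply NNPP. intro Hno.
  assert (psup Fam t <= psup Fam t - e); [|lra].
  apply psup_le. intro i. apply Rnot_lt_le. intro Hlt. apply Hno. exists i. exact Hlt.
Qed.

Lemma psup_in_Dplus : in_Dplus (psup Fam).
Proof.
  destruct I_inhabited as [i0].
  assert (Hmono : forall s t, s <= t -> psup Fam s <= psup Fam t).
  { intros s t Hst. apply psup_le. intro i.
    pose proof (in_Dplus_nondecreasing _ s t (HFam i) Hst). pose proof (psup_ge i t). lra. }
  split; [exact Hmono | split; [|split]].
  - intro t. split.
    + pose proof (psup_ge i0 t). pose proof (in_Dplus_bounds _ t (HFam i0)). lra.
    + apply psup_le. intro i. apply in_Dplus_bounds, HFam.
  - intros t e He. destruct (psup_approx t (e / 2)) as [i Hi]; [lra|].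
    destruct (HFam i) as (_ & _ & Hlc & _).
    destruct (Hlc t (e / 2)) as [d [Hd Hl]]; [lra|].
    exists d. split; [exact Hd|]. intros s Hs1 Hs2. specialize (Hl s Hs1 Hs2).
    apply Rabs_def2 in Hl. pose proof (psup_ge i s). pose proof (Hmono s t Hs2).
    apply Rabs_def1; lra.
  - apply Rle_antisym.
    + apply psup_le. intro i. rewrite (in_Dplus_nonpos _ 0 (HFam i)); lra.
    + pose proof (psup_ge i0 0). pose proof (in_Dplus_bounds _ 0 (HFam i0)). lra.
Qed.

Lemma is_sup_psup : is_sup Fam (psup Fam).
Proof.
  split; [exact psup_in_Dplus | split].
  - intros i t. apply psup_ge.
  - intros U _ HU t. apply psup_le. intro i. apply HU.
Qed.

End PointwiseSup.

Section GeneratingSequences.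

Variables (G : Type) (D : G -> G -> dfun) (star : dfun -> dfun -> dfun).
Hypotheses (HG : PMspace G D star) (star_cont : star_continuous star).
Variables f g : G -> dfun.
Hypotheses (Hf : prob_lipschitz D star f) (Hg : prob_lipschitz D star g).

Local Notation L := (psup (fun x => star (f x) (g x))).

Lemma star_f_g_in_Dplus (x : G) : in_Dplus (star (f x) (g x)).
Proof. destruct HG as ((Hin & _) & _). apply Hin; [apply Hf | apply Hg]. Qed.

Lemma D_eventually_gt (a b : nat -> G) :
  (forall x, wconv (fun n => D (a n) x) (f x)) ->
  (forall x, wconv (fun n => D (b n) x) (g x)) ->
  forall t e, 0 < e -> exists N, forall n m, (N <= n)%nat -> (N <= m)%nat ->
    L t - e < D (a n) (b m) t.
Proof.
  intros Haf Hbg t e He.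
  destruct HG as ((Hin & _) & HD & _ & Hsym & Htri).
  assert (HG_inh : inhabited G) by exact (inhabits (a 0%nat)).
  destruct (psup_approx _ _ HG_inh star_f_g_in_Dplus t (e / 2)) as [x Hx]; [lra|].
  apply eventually2_of_subseqs. intros phi psi Hphi Hpsi.
  assert (Hb' : wconv (fun k => D x (b (psi k))) (g x)).
  { replace (fun k => D x (b (psi k))) with (fun k => D (b (psi k)) x)
      by (apply functional_extensionality; intro k; apply Hsym).
    apply (wconv_subseq (fun n => D (b n) x)); auto. }
  pose proof (star_cont _ _ _ _ (fun k => HD _ _) (fun k => HD _ _) (proj1 Hf x) (proj1 Hg x)
                (wconv_subseq _ _ _ Hphi (Haf x)) Hb') as Hconv.
  destruct (wconv_eventually_gt _ _ (fun k => Hin _ _ (HD _ _) (HD _ _)) (star_f_g_in_Dplus x)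
              Hconv t (e / 2)) as [K HK]; [lra|].
  exists K. intros k Hk. specialize (HK k Hk).
  pose proof (Htri (a (phi k)) x (b (psi k)) t). lra.
Qed.

Lemma D_eventually_lt (a b : nat -> G) :
  cauchy_seq D a -> cauchy_seq D b ->
  (forall x, wconv (fun n => D (a n) x) (f x)) ->
  (forall x, wconv (fun n => D (b n) x) (g x)) ->
  forall t, continuity_pt L t -> forall e, 0 < e ->
  exists N, forall n m, (N <= n)%nat -> (N <= m)%nat -> D (a n) (b m) t < L t + e.
Proof.
  intros Ha Hb Haf Hbg t Ht e He.
  pose proof HG as (Htf & HD & _ & Hsym & _).
  pose proof Htf as (Hin & _ & Hassoc & Hmono & _).
  destruct Hf as [Hfin Hflip], Hg as [Hgin _].
  assert (HG_inh : inhabited G) by exact (inhabits (a 0%nat)).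
  apply eventually2_of_subseqs. intros phi psi Hphi Hpsi.
  apply (eventually_lt_of_star_le star Htf star_cont L
           (fun k => D (a (phi k)) (b (psi k))) (fun k => star (f (a (phi k))) (g (b (psi k))))).
  - exact (psup_in_Dplus _ _ HG_inh star_f_g_in_Dplus).
  - intro k. apply HD.
  - intro k. apply Hin; auto.
  - rewrite <- (star_H0_r star Htf H0 H0_in_Dplus).
    apply star_cont; auto using H0_in_Dplus.
    + apply (wconv_subseq (fun n => f (a n))); [exact Hphi|].
      exact (wconv_generated_H0 G D f a HD Hfin Ha Haf).
    + apply (wconv_subseq (fun n => g (b n))); [exact Hpsi|].
      exact (wconv_generated_H0 G D g b HD Hgin Hb Hbg).
  - intros k s. cbn beta.
    rewrite <- Hassoc, (Hsym (a (phi k))) by auto.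
    pose proof (Hmono _ _ (g (b (psi k))) (Hin _ _ (HD _ _) (Hfin _)) (Hfin _) (Hgin _)
                  (Hflip (b (psi k)) (a (phi k))) s).
    pose proof (psup_ge _ _ HG_inh star_f_g_in_Dplus (b (psi k)) s). lra.
  - exact Ht.
  - exact He.
Qed.

Lemma wconv2_D_psup (a b : nat -> G) :
  cauchy_seq D a -> cauchy_seq D b ->
  (forall x, wconv (fun n => D (a n) x) (f x)) ->
  (forall x, wconv (fun n => D (b n) x) (g x)) ->
  wconv2 (fun n m => D (a n) (b m)) L.
Proof.
  intros Ha Hb Haf Hbg t Ht e He.
  destruct (D_eventually_gt a b Haf Hbg t e He) as [N1 HN1].
  destruct (D_eventually_lt a b Ha Hb Haf Hbg t Ht e He) as [N2 HN2].
  exists (max N1 N2). intros n m Hn Hm.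
  specialize (HN1 n m ltac:(lia) ltac:(lia)). specialize (HN2 n m ltac:(lia) ltac:(lia)).
  apply Rabs_def1; lra.
Qed.

Lemma wconv_f_psup (a b : nat -> G) :
  cauchy_seq D b ->
  (forall x, wconv (fun n => D (a n) x) (f x)) ->
  (forall x, wconv (fun n => D (b n) x) (g x)) ->
  wconv (fun m => f (b m)) L.
Proof.
  intros Hb Haf Hbg t Ht e He.
  pose proof HG as (Htf & HD & _).
  destruct Hf as [Hfin _], Hg as [Hgin _].
  assert (HG_inh : inhabited G) by exact (inhabits (a 0%nat)).
  pose proof (psup_in_Dplus _ _ HG_inh star_f_g_in_Dplus) as HL.
  destruct (eventually_lt_of_star_le star Htf star_cont L (fun m => f (b m)) (fun m => g (b m))
              HL (fun m => Hfin _) (fun m => Hgin _) (wconv_generated_H0 G D g b HD Hgin Hb Hbg)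
              (fun m s => psup_ge _ _ HG_inh star_f_g_in_Dplus (b m) s) t Ht e He)
    as [K1 HK1].
  destruct HL as (_ & _ & HLlc & _).
  destruct (HLlc t (e / 2)) as [d [Hd Hl]]; [lra|].
  set (s := t - d / 2).
  assert (HLs : L t - e / 2 < L s) by (specialize (Hl s ltac:(unfold s; lra) ltac:(unfold s; lra));
                                      apply Rabs_def2 in Hl; lra).
  destruct (D_eventually_gt a b Haf Hbg s (e / 2)) as [N HN]; [lra|].
  exists (max K1 N). intros m Hm. specialize (HK1 m ltac:(lia)).
  assert (L s - e / 2 <= f (b m) t).
  { apply (wconv_ge (fun n => D (a n) (b m)) (f (b m)) (fun n => HD _ _) (Hfin _) (Haf _) s);
      [unfold s; lra|].
    exists N. intros n Hn. left. apply HN; lia. }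
  unfold Rdist. apply Rabs_def1; lra.
Qed.

End GeneratingSequences.

Theorem mainTheorem10 (G : Type) (D : G -> G -> dfun) (star : dfun -> dfun -> dfun)
  (HG : PMspace G D star) (Hstar : star_continuous star)
  (f g : G -> dfun) (Hf : in_Pi D star f) (Hg : in_Pi D star g)
  (a b : nat -> G) (Ha : cauchy_seq D a) (Hb : cauchy_seq D b)
  (Haf : forall x, wconv (fun n => D (a n) x) (f x))
  (Hbg : forall x, wconv (fun n => D (b n) x) (g x)) :
  exists L : dfun,
    in_Dplus L /\
    wconv2 (fun n m => D (a n) (b m)) L /\
    (forall a' b' : nat -> G, cauchy_seq D a' -> cauchy_seq D b' ->
       (forall x, wconv (fun n => D (a' n) x) (f x)) ->
       (forall x, wconv (fun n => D (b' n) x) (g x)) ->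
       wconv2 (fun n m => D (a' n) (b' m)) L) /\
    is_sup (fun x => star (f x) (g x)) L /\
    wconv (fun n => D (a n) (b n)) L /\
    wconv (fun m => f (b m)) L /\
    wconv (fun n => g (a n)) L.
Proof.
  destruct Hf as [Hflip _], Hg as [Hglip _].
  assert (HG_inh : inhabited G) by exact (inhabits (a 0%nat)).
  assert (Hcomm : (fun x => star (g x) (f x)) = (fun x => star (f x) (g x))).
  { destruct HG as ((_ & Hc & _) & _).
    apply functional_extensionality. intro x. apply functional_extensionality. intro t.
    apply Hc; [apply Hglip | apply Hflip]. }
  pose proof (wconv2_D_psup G D star HG Hstar f g Hflip Hglip) as HW2.
  exists (psup (fun x => star (f x) (g x))).
  split; [|split; [|split; [|split; [|split; [|split]]]]].
  - exact (psup_in_Dplus _ _ HG_inh (star_f_g_in_Dplus G D star HG f g Hflip Hglip)).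
  - exact (HW2 a b Ha Hb Haf Hbg).
  - exact HW2.
  - exact (is_sup_psup _ _ HG_inh (star_f_g_in_Dplus G D star HG f g Hflip Hglip)).
  - exact (wconv2_diag _ _ (HW2 a b Ha Hb Haf Hbg)).
  - exact (wconv_f_psup G D star HG Hstar f g Hflip Hglip a b Hb Haf Hbg).
  - rewrite <- Hcomm. exact (wconv_f_psup G D star HG Hstar g f Hglip Hflip b a Ha Hbg Haf).
Qed.
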